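(* Identify $E$ with its image under global coordinates. Then: (i) the set of $\mathrm{Spin}(2)$ representation classes in $E$ is exactly $E_2$; (ii) the set of $\mathrm{Pin}(2)$ representation classes in $E$ is $E_2$ together with the points of $E$ lying on the three coordinate axes of $\mathbb{R}^3$; (iii) for each $-2<k<2$, exactly six points of $E_k$ are $\mathrm{Pin}(2)$ representation classes.
   Context: $M$ is a torus with one boundary component; $\pi_1(M)$ is free on $X,Y$, and $K=XYX^{-1}Y^{-1}$. $E=\operatorname{Hom}(\pi_1(M),\mathrm{SU}(2))/\mathrm{SU}(2)$ is identified via $[\sigma]\mapsto(\operatorname{tr}\sigma(X),\operatorname{tr}\sigma(Y),\operatorname{tr}\sigma(XY))$ with $\{(x,y,z)\in[-2,2]^3:-2\le x^2+y^2+z^2-xyz-2\le2\}$, and $E_k=\{(x,y,z)\in E: x^2+y^2+z^2-xyz-2=k\}$ (note $\operatorname{tr}\sigma(K)=x^2+y^2+z^2-xyz-2$). In the quaternionic model ($1,\mathrm{i},\mathrm{j},\mathrm{k}$ = the matrices $\begin{pmatrix}1&0\\0&1\end{pmatrix},\begin{pmatrix}i&0\\0&-i\end{pmatrix},\begin{pmatrix}0&1\\-1&0\end{pmatrix},\begin{pmatrix}0&i\\i&0\end{pmatrix}$), $\mathrm{Spin}(2)=\{\cos\theta+\sin\theta\,\mathrm{j}\}$, $\mathrm{Spin}_-(2)=\{\cos\theta\,\mathrm{k}+\sin\theta\,\mathrm{i}\}$, $\mathrm{Pin}(2)=\mathrm{Spin}(2)\cup\mathrm{Spin}_-(2)$.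 For a subgroup $G\subset\mathrm{SU}(2)$, a point $[\sigma]\in E$ is a $G$ representation class if some representative takes values in $G$. *)

From Stdlib Require Import Reals List.
Open Scope R_scope.

(* Quaternionic model of SU(2): the quaternion a + b i + c j + d k is the
   2x2 complex matrix [[a + b*I, c + d*I], [-c + d*I, a - b*I]], with
   1,i,j,k the matrices given in the paper.  Matrix product = Hamilton
   product, and the matrix trace is 2a. *)
Record quat := Quat { qa : R; qb : R; qc : R; qd : R }.

Definition qmul (p q : quat) : quat :=
  Quat (qa p * qa q - qb p * qb q - qc p * qc q - qd p * qd q)
       (qa p * qb q + qb p * qa q + qc p * qd q - qd p * qc q)
       (qa p * qc q - qb p * qd q + qc p * qa q + qd p * qb q)
       (qa p * qd q + qb p * qc q - qc p * qb q + qd p * qa q).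

Definition qtr (q : quat) : R := 2 * qa q.

(* SU(2) = unit quaternions (determinant of the matrix = a^2+b^2+c^2+d^2) *)
Definition SU2 (q : quat) : Prop :=
  qa q ^ 2 + qb q ^ 2 + qc q ^ 2 + qd q ^ 2 = 1.

Definition Spin2 (q : quat) : Prop :=
  exists t : R, q = Quat (cos t) 0 (sin t) 0.
Definition Spin2m (q : quat) : Prop :=
  exists t : R, q = Quat 0 (sin t) 0 (cos t).
Definition Pin2 (q : quat) : Prop := Spin2 q \/ Spin2m q.

Definition pt := (R * R * R)%type.

(* tr sigma(K) in global coordinates *)
Definition kappa (p : pt) : R :=
  let '(x, y, z) := p in x ^ 2 + y ^ 2 + z ^ 2 - x * y * z - 2.

Definition E (p : pt) : Prop :=
  let '(x, y, z) := p in
  -2 <= x <= 2 /\ -2 <= y <= 2 /\ -2 <= z <= 2 /\ -2 <= kappa p <= 2.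

Definition Ek (k : R) (p : pt) : Prop := E p /\ kappa p = k.

(* A representation sigma of the free group on X, Y is the pair
   (sigma X, sigma Y) in SU(2)^2.  The point p (in coordinates) is a
   G representation class iff some representative of the class takes
   values in G, i.e. p = (tr a, tr b, tr ab) for some a, b in G. *)
Definition GRepClass (G : quat -> Prop) (p : pt) : Prop :=
  exists a b : quat, SU2 a /\ SU2 b /\ G a /\ G b /\
    p = (qtr a, qtr b, qtr (qmul a b)).

Definition on_axis (p : pt) : Prop :=
  let '(x, y, z) := p in
  (y = 0 /\ z = 0) \/ (x = 0 /\ z = 0) \/ (x = 0 /\ y = 0).

(* Spin(2) is the circle t |-> cos t + sin t j, so a pair (a, b) of its elements
   has trace coordinates (2 cos s, 2 cos t, 2 cos (s + t)).  The identity
   kappa - 2 = (z - x y / 2)^2 - (4 - x^2) (4 - y^2) / 4 shows that these are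
   exactly the points of E with kappa = 2.  Spin_-(2) is the other coset of
   Spin(2) in Pin(2) and consists of traceless elements, so a pair involving it
   has at least two vanishing coordinates; conversely every point of E on an
   axis arises this way.  For -2 < k < 2 the axes meet E_k in the six points
   with one coordinate equal to +-sqrt (k + 2). *)

From Stdlib Require Import Reals List Lra Psatz.
Open Scope R_scope.

Definition spin (t : R) : quat := Quat (cos t) 0 (sin t) 0.
Definition spin_minus (t : R) : quat := Quat 0 (sin t) 0 (cos t).

Lemma SU2_spin (t : R) : SU2 (spin t).
Proof. unfold SU2; simpl; pose proof (sin2_cos2 t); unfold Rsqr in *; lra. Qed.

Lemma SU2_spin_minus (t : R) : SU2 (spin_minus t).
Proof. unfold SU2; simpl; pose proof (sin2_cos2 t); unfold Rsqr in *; lra. Qed.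

Lemma qtr_spin (t : R) : qtr (spin t) = 2 * cos t.
Proof. reflexivity. Qed.

Lemma qtr_spin_minus (t : R) : qtr (spin_minus t) = 0.
Proof. unfold qtr; simpl; ring. Qed.

Lemma qmul_spin (s t : R) : qmul (spin s) (spin t) = spin (s + t).
Proof. unfold qmul, spin; simpl; rewrite cos_plus, sin_plus; f_equal; ring. Qed.

Lemma qmul_spin_spin_minus (s t : R) :
  qmul (spin s) (spin_minus t) = spin_minus (s + t).
Proof. unfold qmul, spin, spin_minus; simpl; rewrite cos_plus, sin_plus; f_equal; ring. Qed.

Lemma qmul_spin_minus_spin (s t : R) :
  qmul (spin_minus s) (spin t) = spin_minus (s - t).
Proof. unfold qmul, spin, spin_minus; simpl; rewrite cos_minus, sin_minus; f_equal; ring. Qed.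

Lemma qmul_spin_minus (s t : R) :
  qmul (spin_minus s) (spin_minus t) = spin (s - t + PI).
Proof.
  unfold qmul, spin, spin_minus; simpl.
  rewrite cos_plus, sin_plus, cos_minus, sin_minus, cos_PI, sin_PI; f_equal; ring.
Qed.

Lemma GRepClass_mono (G H : quat -> Prop) (p : pt) :
  (forall q, G q -> H q) -> GRepClass G p -> GRepClass H p.
Proof.
  intros GH (a & b & Ua & Ub & Ga & Gb & ->).
  exists a, b; auto 6.
Qed.

Lemma kappa_sub2 (x y z : R) :
  kappa (x, y, z) - 2 = (z - x * y / 2) ^ 2 - (4 - x ^ 2) * (4 - y ^ 2) / 4.
Proof. simpl; field. Qed.

Lemma kappa_cos (s t : R) :
  kappa (2 * cos s, 2 * cos t, 2 * cos (s + t)) = 2.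
Proof.
  enough (kappa (2 * cos s, 2 * cos t, 2 * cos (s + t)) - 2 = 0) by lra.
  rewrite kappa_sub2, cos_plus.
  pose proof (sin2_cos2 s); pose proof (sin2_cos2 t); unfold Rsqr in *.
  replace (4 - (2 * cos s) ^ 2) with (4 * (sin s * sin s)) by nra.
  replace (4 - (2 * cos t) ^ 2) with (4 * (sin t * sin t)) by nra.
  field.
Qed.

Lemma cos_bound2 (t : R) : -2 <= 2 * cos t <= 2.
Proof. pose proof (COS_bound t); lra. Qed.

Lemma exists_2cos (x : R) : -2 <= x <= 2 -> exists t, x = 2 * cos t.
Proof. intros Hx; exists (acos (x / 2)); rewrite cos_acos; lra. Qed.

Lemma Ek2_cos (s t : R) : Ek 2 (2 * cos s, 2 * cos t, 2 * cos (s + t)).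
Proof.
  split; [|apply kappa_cos].
  pose proof (kappa_cos s t).
  repeat split; try apply cos_bound2; lra.
Qed.

Lemma Ek2_cos_inv (p : pt) :
  Ek 2 p -> exists s t, p = (2 * cos s, 2 * cos t, 2 * cos (s + t)).
Proof.
  destruct p as [[x y] z]; intros [(Hx & Hy & _) Hk].
  destruct (exists_2cos x Hx) as [s ->], (exists_2cos y Hy) as [t ->].
  (* kappa = 2 makes z - x y / 2 = +- 2 sin s sin t *)
  assert (Hz : (z - 2 * cos s * cos t)² = (2 * sin s * sin t)²).
  { pose proof (kappa_sub2 (2 * cos s) (2 * cos t) z) as K.
    pose proof (sin2_cos2 s); pose proof (sin2_cos2 t); unfold Rsqr in *.
    rewrite Hk in K; nra. }
  destruct (Rsqr_eq _ _ Hz) as [Hz' | Hz'].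
  - exists s, (- t); rewrite cos_neg, cos_plus, cos_neg, sin_neg.
    f_equal; try f_equal; lra.
  - exists s, t; rewrite cos_plus; f_equal; lra.
Qed.

Lemma Spin2_class_iff (p : pt) : GRepClass Spin2 p <-> Ek 2 p.
Proof.
  split.
  - intros (a & b & _ & _ & [s ->] & [t ->] & ->).
    fold (spin s) (spin t); rewrite qmul_spin, !qtr_spin; apply Ek2_cos.
  - intros Hp; destruct (Ek2_cos_inv p Hp) as (s & t & ->).
    exists (spin s), (spin t).
    repeat split; try apply SU2_spin; try (eexists; reflexivity).
    rewrite qmul_spin, !qtr_spin; reflexivity.
Qed.

Lemma Pin2_class_cases (p : pt) :
  GRepClass Pin2 p -> GRepClass Spin2 p \/ on_axis p.
Proof.
  intros (a & b & Ua & Ub & [[s ->] | [s ->]] & [[t ->] | [t ->]] & ->);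
    fold (spin s) (spin t) (spin_minus s) (spin_minus t).
  - left; exists (spin s), (spin t).
    repeat split; try apply SU2_spin; eexists; reflexivity.
  - right; rewrite qmul_spin_spin_minus, !qtr_spin_minus; simpl; auto.
  - right; rewrite qmul_spin_minus_spin, !qtr_spin_minus; simpl; auto.
  - right; rewrite !qtr_spin_minus; simpl; auto.
Qed.

Lemma on_axis_Pin2_class (p : pt) : E p -> on_axis p -> GRepClass Pin2 p.
Proof.
  destruct p as [[x y] z]; intros (Hx & Hy & Hz & _) Hax.
  assert (Pin2_spin : forall t, Pin2 (spin t)) by (intros t; left; exists t; reflexivity).
  assert (Pin2_spin_minus : forall t, Pin2 (spin_minus t))
    by (intros t; right; exists t; reflexivity).
  destruct Hax as [[-> ->] | [[-> ->] | [-> ->]]].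
  - destruct (exists_2cos x Hx) as [s ->].
    exists (spin s), (spin_minus 0); rewrite qmul_spin_spin_minus, qtr_spin, !qtr_spin_minus.
    repeat split; auto using SU2_spin, SU2_spin_minus.
  - destruct (exists_2cos y Hy) as [t ->].
    exists (spin_minus 0), (spin t); rewrite qmul_spin_minus_spin, qtr_spin, !qtr_spin_minus.
    repeat split; auto using SU2_spin, SU2_spin_minus.
  - destruct (exists_2cos z Hz) as [u ->].
    exists (spin_minus 0), (spin_minus (- u + PI)); rewrite qmul_spin_minus, qtr_spin, !qtr_spin_minus.
    replace (0 - (- u + PI) + PI) with u by ring.
    repeat split; auto using SU2_spin_minus.
Qed.

Lemma Pin2_class_iff (p : pt) :
  (E p /\ GRepClass Pin2 p) <-> (Ek 2 p \/ (E p /\ on_axis p)).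
Proof.
  split.
  - intros [Hp HG]; destruct (Pin2_class_cases p HG) as [HS | Hax].
    + left; apply Spin2_class_iff, HS.
    + right; split; assumption.
  - intros [Hp | [Hp Hax]].
    + split; [apply Hp|].
      apply (GRepClass_mono Spin2); [intros q; left; assumption|].
      apply Spin2_class_iff, Hp.
    + split; [|apply on_axis_Pin2_class]; assumption.
Qed.

Lemma Pin2_class_Ek (k : R) (p : pt) : k <> 2 ->
  (Ek k p /\ GRepClass Pin2 p <-> Ek k p /\ on_axis p).
Proof.
  intros Hk2; pose proof (Pin2_class_iff p) as HP.
  split; intros [[Hp Hkp] H]; split; try (split; assumption).
  - destruct (proj1 HP (conj Hp H)) as [[_ H2] | [_ Hax]]; [congruence | exact Hax].
  - apply (proj2 HP); right; split; assumption.
Qed.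

Definition axis_points (r : R) : list pt :=
  (r, 0, 0) :: (-r, 0, 0) :: (0, r, 0) :: (0, -r, 0) :: (0, 0, r) :: (0, 0, -r) :: nil.

Lemma NoDup_axis_points (r : R) : r <> 0 -> NoDup (axis_points r).
Proof.
  intros Hr; unfold axis_points.
  repeat constructor; simpl; intros Hin;
    repeat destruct Hin as [Hin | Hin]; try contradiction; injection Hin; lra.
Qed.

Lemma Ek_on_axis (k : R) (p : pt) : -2 < k < 2 ->
  (Ek k p /\ on_axis p <-> In p (axis_points (sqrt (k + 2)))).
Proof.
  intros Hk; set (r := sqrt (k + 2)).
  assert (Hr2 : r * r = k + 2) by (apply sqrt_sqrt; lra).
  assert (Hr : 0 < r) by (apply sqrt_lt_R0; lra).
  destruct p as [[x y] z]; unfold Ek, E, kappa, on_axis, axis_points; simpl.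
  split.
  - intros [[_ Hkp] Hax].
    destruct Hax as [[-> ->] | [[-> ->] | [-> ->]]];
      [ assert (Hu : x² = r²) by (unfold Rsqr; nra); destruct (Rsqr_eq _ _ Hu) as [-> | ->]
      | assert (Hu : y² = r²) by (unfold Rsqr; nra); destruct (Rsqr_eq _ _ Hu) as [-> | ->]
      | assert (Hu : z² = r²) by (unfold Rsqr; nra); destruct (Rsqr_eq _ _ Hu) as [-> | ->] ];
      tauto.
  - intros Hin; repeat destruct Hin as [Hin | Hin]; try contradiction;
      injection Hin as <- <- <-; repeat split; try nra; tauto.
Qed.

Theorem corollary3p2 :
  (forall p : pt, (E p /\ GRepClass Spin2 p) <-> Ek 2 p) /\
  (forall p : pt, (E p /\ GRepClass Pin2 p) <-> (Ek 2 p \/ (E p /\ on_axis p))) /\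
  (forall k : R, -2 < k < 2 ->
     exists l : list pt, length l = 6%nat /\ NoDup l /\
       forall p : pt, (Ek k p /\ GRepClass Pin2 p) <-> In p l).
Proof.
  split; [|split; [exact Pin2_class_iff|]].
  - intros p; rewrite Spin2_class_iff.
    split; [intros [_ Hp] | intros Hp; split; [apply Hp|]]; exact Hp.
  - intros k Hk; exists (axis_points (sqrt (k + 2))).
    split; [reflexivity|].
    split; [apply NoDup_axis_points, Rgt_not_eq, sqrt_lt_R0; lra|].
    intros p; rewrite Pin2_class_Ek by lra; apply Ek_on_axis, Hk.
Qed.
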